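(* Let $\ell\le d\le n/2$ and suppose $d$ is known in advance to the algorithm. Any adaptive randomized group testing algorithm that, for every defective set $I\subseteq[n]$ with $|I|=d$, with probability at least $2/3$ detects $\ell$ defective items must make (in the worst case) at least $\ell\log(n/d)-1$ tests.
   Context: Group testing: items $X=[n]$, unknown defective set $I\subseteq X$ with $d=|I|$. A test $Q\subseteq X$ has answer $1$ if $Q\cap I\neq\emptyset$ and $0$ otherwise; the algorithm accesses $I$ only through tests, and in an adaptive algorithm tests may depend on previous answers. ''Detects $\ell$ defective items'' means it outputs $L\subseteq I$ with $|L|=\ell$. ''$d$ is known in advance'' means the algorithm is given an integer $D$ with $d/4\le D\le 4d$ (in particular, the bound applies even when $d$ is given exactly). Logarithms are base 2. *)

From HB Require Import structures.
From mathcomp Require Import all_boot all_order all_algebra.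
From mathcomp Require Import all_classical all_reals all_analysis.
Set Implicit Arguments. Unset Strict Implicit. Unset Printing Implicit Defensive.
Import Order.TTheory GRing.Theory Num.Theory.
Local Open Scope ring_scope.

(* A deterministic adaptive group-testing algorithm on items 'I_n is a binary
   decision tree: an internal node asks the test Q (answer 1 iff Q meets the
   defective set) and continues in the 0-subtree or the 1-subtree; a leaf
   outputs a set L. Since d is fixed, the algorithm may depend on d freely
   ("d known in advance", even exactly). *)
Inductive gtree (n : nat) : Type :=
| GLeaf of {set 'I_n}
| GNode of {set 'I_n} & gtree n & gtree n.

Arguments GLeaf {n}.
Arguments GNode {n}.

Definition test_answer (n : nat) (Q I : {set 'I_n}) : bool := Q :&: I != finset.set0.

Fixpoint gt_output (n : nat) (t : gtree n) (I : {set 'I_n}) : {set 'I_n} :=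
  match t with
  | GLeaf L => L
  | GNode Q t0 t1 => if test_answer Q I then gt_output t1 I else gt_output t0 I
  end.

Fixpoint gt_tests (n : nat) (t : gtree n) (I : {set 'I_n}) : nat :=
  match t with
  | GLeaf _ => 0%N
  | GNode Q t0 t1 =>
      (if test_answer Q I then gt_tests t1 I else gt_tests t0 I).+1
  end.

Definition detects (n l : nat) (I L : {set 'I_n}) : bool :=
  (L \subset I) && (#|L| == l).

(* A randomized adaptive algorithm: a finitely supported probability
   distribution over deterministic decision trees: k outcomes of the random
   coins, outcome i having probability ra_w i and running tree ra_t i.
   (Any distribution over algorithms with bounded worst-case number of tests
   can be pushed forward to the finite set of such trees, so finite support
   is no loss of generality.) *)
Record rand_alg (R : realType) (n : nat) := RandAlg {
  ra_k : nat;
  ra_w : 'I_ra_k -> R;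
  ra_t : 'I_ra_k -> gtree n }.
Arguments ra_k {R n}.
Arguments ra_w {R n}.
Arguments ra_t {R n}.

Definition is_distribution (R : realType) (n : nat) (A : rand_alg R n) : Prop :=
  (forall i, 0 <= ra_w A i) /\ \sum_(i < ra_k A) ra_w A i = 1.

Definition success_prob (R : realType) (n l : nat) (A : rand_alg R n)
    (I : {set 'I_n}) : R :=
  \sum_(i < ra_k A | detects l I (gt_output (ra_t A i) I)) ra_w A i.

Definition log2 (R : realType) (x : R) : R := ln x / ln 2.

From HB Require Import structures.
From mathcomp Require Import all_boot all_order all_algebra.
From mathcomp Require Import all_classical all_reals all_analysis.
From mathcomp Require Import ring lra zify.
Set Implicit Arguments. Unset Strict Implicit. Unset Printing Implicit Defensive.
Import Order.TTheory GRing.Theory Num.Theory.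
Local Open Scope ring_scope.

(* A deterministic tree making at most m tests on every d-set has at most 2^m
   leaves, and the output L of a leaf (with |L| = l) is a correct answer for at
   most C(n-l, d-l) of the C(n, d) defective sets.  As C(n-l, d-l) / C(n, d)
   <= (d/n)^l, the tree succeeds on at most a 2^m (d/n)^l fraction of the
   d-sets, which is below 1/2 when m < l log(n/d) - 1.  If every tree in the
   support of a randomized algorithm were that fast, averaging over the coins
   and over a uniform d-set would give some d-set success probability at most
   1/2 < 2/3 (Yao's principle). *)

(* For x = n and y = d this reads C(n-l, d-l) / C(n, d) <= (d/n)^l; the free
   ratio x/y is what lets the induction on l go through. *)
Lemma leq_bin_sub_exp (l n d x y : nat) : (l <= d)%N -> (d <= n)%N ->
  (x * d <= y * n)%N -> ('C(n - l, d - l) * x ^ l <= 'C(n, d) * y ^ l)%N.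
Proof.
elim: l n d => [|l IHl] n d le_ld le_dn le_xy; first by rewrite !subn0 !muln1.
case: d le_ld le_dn le_xy => [//|d] le_ld le_dn le_xy.
case: n le_dn le_xy => [//|n] le_dn le_xy; rewrite !subSS.
have le_xy' : (x * d <= y * n)%N.
  by rewrite -(leq_pmul2r (ltn0Sn d)); nia.
have IH := IHl n d le_ld le_dn le_xy'.
have pascal := mul_bin_diag n.+1 d; rewrite /= in pascal.
rewrite -(leq_pmul2r (ltn0Sn d)) !expnS.
have -> : ('C(n.+1, d.+1) * (y * y ^ l) * d.+1 = 'C(n, d) * y ^ l * (y * n.+1))%N.
  transitivity (d.+1 * 'C(n.+1, d.+1) * (y * y ^ l))%N; first by ring.
  by rewrite -pascal; ring.
apply: (@leq_trans ('C(n, d) * y ^ l * (x * d.+1))).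
  apply: (@leq_trans ('C(n - l, d - l) * x ^ l * (x * d.+1))).
    by apply: eq_leq; ring.
  by rewrite leq_mul2r IH orbT.
by rewrite leq_mul2l le_xy orbT.
Qed.

Lemma card_supersets_leq (T : finType) (L : {set T}) (d : nat) :
  (#|[set I : {set T} | L \subset I & #|I| == d]| <= 'C(#|T| - #|L|, d - #|L|))%N.
Proof.
set S := [set I : {set T} | _].
have inj_diffL : {in S &, injective (fun I => I :\: L)}.
  move=> I1 I2; rewrite !inE.
  move=> /andP[/finset.setIidPr E1 _] /andP[/finset.setIidPr E2 _] eq12.
  by rewrite -(setID I1 L) -(setID I2 L) E1 E2 eq12.
rewrite -(card_in_imset inj_diffL) -[#|T|](cardsC L) addKn -cards_draws.
apply/subset_leq_card/fintype.subsetP => _ /imsetP[I + ->].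
rewrite !inE => /andP[subLI /eqP <-].
rewrite cardsD (finset.setIidPr subLI) eqxx andbT.
by apply/fintype.subsetP => x; rewrite !inE => /andP[].
Qed.

Definition gt_successes (n l : nat) (t : gtree n) (S : {set {set 'I_n}}) :
  {set {set 'I_n}} := [set I in S | detects l I (gt_output t I)].

Lemma card_gt_successes (n d l : nat) (t : gtree n) (m : nat)
    (S : {set {set 'I_n}}) :
  {in S, forall I : {set 'I_n}, #|I| = d} ->
  {in S, forall I, (gt_tests t I <= m)%N} ->
  (#|gt_successes l t S| <= 2 ^ m * 'C(n - l, d - l))%N.
Proof.
elim: t m S => [L | Q t0 IH0 t1 IH1] m S sizeS testsS.
  apply: leq_trans (leq_pmull _ (expn_gt0 2 m)).
  have [sizeL | sizeL] := eqVneq #|L| l; last first.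
    suff -> : gt_successes l (GLeaf L) S = finset.set0 by rewrite cards0.
    by apply/setP => I; rewrite /gt_successes !inE /detects (negbTE sizeL) !andbF.
  have := card_supersets_leq L d; rewrite card_ord sizeL => /(leq_trans _); apply.
  apply/subset_leq_card/fintype.subsetP => I.
  by rewrite /gt_successes /detects !inE /= => /and3P[SI -> _]; apply/eqP/sizeS.
case: m testsS => [|m] testsS.
  suff -> : gt_successes l (GNode Q t0 t1) S = finset.set0 by rewrite cards0.
  by apply/setP => I; rewrite /gt_successes !inE; apply/negbTE/negP => /andP[/testsS].
set B := [set I : {set 'I_n} | test_answer Q I].
have -> : gt_successes l (GNode Q t0 t1) S
    = gt_successes l t1 (S :&: B) :|: gt_successes l t0 (S :\: B).
  apply/setP => I; rewrite /gt_successes /B !inE /=.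
  by case: (test_answer Q I); rewrite ?andbT ?andbF ?orbF.
rewrite expnS mul2n -addnn mulnDl; apply: leq_trans (leq_card_setU _ _) (leq_add _ _).
  apply: IH1 => I; rewrite inE => /andP[SI BI]; first exact: sizeS.
  by have := testsS I SI; rewrite inE in BI; rewrite /= BI.
apply: IH0 => I; rewrite inE => /andP[BI SI]; first exact: sizeS.
by have := testsS I SI; rewrite inE in BI; rewrite /= (negbTE BI).
Qed.

(* No positivity hypothesis is needed: if n or d is 0 then n / d = 0 and
   ln 0 = 0, so the premise fails. *)
Lemma exp2_lt_of_lt_log2 (R : realType) (m l n d : nat) :
  m%:R < l%:R * log2 (n%:R / d%:R) - 1 :> R -> (2 ^ m.+1 * d ^ l < n ^ l)%N.
Proof.
set x : R := n%:R / d%:R => lt_m.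
have m_ge0 : 0 <= m%:R :> R by [].
have [x_le0 | x_gt0] := lerP x 0.
  by move: lt_m; rewrite /log2 ln0 // mul0r mulr0; lra.
have d_gt0 : (0 < d)%N.
  by rewrite lt0n; apply: contraTneq x_gt0 => d0; rewrite /x d0 invr0 mulr0 ltxx.
have ln2_gt0 : 0 < ln (2 : R) by apply: ln_gt0; rewrite ltr1n.
have lt_ln : ln (2 ^+ m.+1) < ln (x ^+ l).
  rewrite (lnXn _ x_gt0) (lnXn _ (ltr0Sn R 1)).
  rewrite -(mulr_natl (ln 2)) -(mulr_natl (ln x)) -ltr_pdivlMr //.
  by move: lt_m; rewrite /log2 mulrA -[m.+1]addn1 natrD; lra.
have lt_pow : 2 ^+ m.+1 < x ^+ l.
  by move: lt_ln; rewrite ltr_ln ?posrE ?exprn_gt0 ?ltr0n.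
rewrite -(ltr_nat R) natrM !natrX -ltr_pdivlMr ?exprn_gt0 ?ltr0n //.
by rewrite -expr_div_n.
Qed.

Lemma gt_successes_half (R : realType) (n d l : nat) (t : gtree n) :
  (l <= d)%N -> (d <= n)%N ->
  (forall I : {set 'I_n}, #|I| = d ->
     (gt_tests t I)%:R < l%:R * log2 (n%:R / d%:R) - 1 :> R) ->
  (2 * #|gt_successes l t [set I : {set 'I_n} | #|I| == d]| <= 'C(n, d))%N.
Proof.
move=> le_ld le_dn tests_lt.
set S := [set I : {set 'I_n} | #|I| == d].
have sizeS : {in S, forall I : {set 'I_n}, #|I| = d} by move=> I; rewrite inE => /eqP.
have cardS : #|S| = 'C(n, d) by rewrite card_draws card_ord.
have S_gt0 : (0 < #|S|)%N by rewrite cardS bin_gt0.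
have [I0 S_I0 maxE] := eq_bigmax_cond (gt_tests t) S_gt0.
set m := (\max_(I in S) gt_tests t I)%N in maxE.
have tests_le : {in S, forall I, (gt_tests t I <= m)%N}.
  by move=> I S_I; apply: leq_bigmax_cond.
have pow_lt : (2 ^ m.+1 * d ^ l < n ^ l)%N.
  by apply: (@exp2_lt_of_lt_log2 R); rewrite maxE; apply/tests_lt/sizeS.
have bin_le := leq_bin_sub_exp le_ld le_dn (eq_leq (mulnC n d)).
have count_le := card_gt_successes l sizeS tests_le.
rewrite -(leq_pmul2r (leq_ltn_trans (leq0n _) pow_lt)).
have := leq_mul count_le (leqnn (n ^ l)).
have := leq_mul (leqnn (2 ^ m)) bin_le.
have := leq_mul (leqnn 'C(n, d)) (ltnW pow_lt).
rewrite expnS; lia.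
Qed.

Lemma sum_success_prob (R : realType) (n l : nat) (A : rand_alg R n)
    (S : {set {set 'I_n}}) :
  \sum_(I in S) success_prob l A I
    = \sum_i ra_w A i * #|gt_successes l (ra_t A i) S|%:R.
Proof.
rewrite /success_prob; under eq_bigr => I _ do rewrite big_mkcond /=.
rewrite exchange_big /=; apply: eq_bigr => i _.
rewrite -big_mkcondr sumr_const mulr_natr; congr (_ *+ _).
by apply: eq_card => I; rewrite !inE.
Qed.

Lemma sum_weighted_le_half (R : realFieldType) (k : nat) (w : 'I_k -> R)
    (c : 'I_k -> nat) (N : nat) :
  (forall i, 0 <= w i) -> \sum_i w i = 1 ->
  (forall i, 0 < w i -> (2 * c i <= N)%N) ->
  \sum_i w i * (c i)%:R <= N%:R / 2.
Proof.
move=> w_ge0 w_sum1 c_le.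
have -> : N%:R / 2 = \sum_i w i * (N%:R / 2) by rewrite -mulr_suml w_sum1 mul1r.
apply: ler_sum => i _.
have [<- | w_gt0] := eqVneq 0 (w i); first by rewrite !mul0r.
rewrite ler_wpM2l // ler_pdivlMr // -(natrM _ _ 2) ler_nat mulnC c_le //.
by rewrite lt_def eq_sym w_gt0 w_ge0.
Qed.

Theorem theorem5 (R : realType) (n d l : nat) (A : rand_alg R n) :
  (l <= d)%N -> (2 * d <= n)%N ->
  is_distribution A ->
  (forall I : {set 'I_n}, #|I| = d -> 2 / 3 <= success_prob l A I) ->
  exists I : {set 'I_n}, exists i : 'I_(ra_k A),
    [/\ #|I| = d, 0 < ra_w A i &
        l%:R * log2 (n%:R / d%:R) - 1 <= (gt_tests (ra_t A i) I)%:R :> R].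
Proof.
move=> le_ld le_2dn [w_ge0 w_sum1] success_ge.
have le_dn : (d <= n)%N by lia.
set S := [set I : {set 'I_n} | #|I| == d].
have cardS : #|S| = 'C(n, d) by rewrite card_draws card_ord.
apply: contrapT => no_witness.
have half i : 0 < ra_w A i -> (2 * #|gt_successes l (ra_t A i) S| <= 'C(n, d))%N.
  move=> w_gt0; apply: (gt_successes_half (R := R)) => // I sizeI.
  by rewrite ltNge; apply/negP => tests_ge; apply: no_witness; exists I, i.
have upper := sum_weighted_le_half w_ge0 w_sum1 half.
have lower : 'C(n, d)%:R * (2 / 3) <= \sum_(I in S) success_prob l A I :> R.
  rewrite -cardS mulr_natl -sumr_const; apply: ler_sum => I.
  by rewrite inE => /eqP /success_ge.
have C_gt0 : 0 < 'C(n, d)%:R :> R by rewrite ltr0n bin_gt0.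
move: lower; rewrite sum_success_prob; lra.
Qed.
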